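(* Let $\mathcal C$ be a linear $[n,k]$ MDS code over $F=\mathrm{GF}(q)$ with $k<n$, and let $L\in\mathbb Z^+$ satisfy $L<\binom{n}{k}$. If $q\ge\binom{n}{k+1}$, then $\mathcal C$ is not $(n-k,L)$-list decodable.
   Context: For $L\in\mathbb Z^+$ and $\tau\in\mathbb Z_{\ge0}$, a code $\mathcal C\subseteq F^n$ is $(\tau,L)$-list decodable if for every $y\in F^n$ at most $L$ codewords of $\mathcal C$ lie at Hamming distance at most $\tau$ from $y$. *)

From HB Require Import structures.
From mathcomp Require Import all_boot all_order all_algebra.
Set Implicit Arguments. Unset Strict Implicit. Unset Printing Implicit Defensive.
Import GRing.Theory.
Local Open Scope ring_scope.

Definition hdist (F : finFieldType) (n : nat) (x y : 'rV[F]_n) : nat :=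
  #|[set i : 'I_n | x 0 i != y 0 i]|.

Definition has_min_dist (F : finFieldType) (n : nat) (C : {vspace 'rV[F]_n}) (d : nat) : Prop :=
  (forall c1 c2, c1 \in C -> c2 \in C -> c1 != c2 -> (d <= hdist c1 c2)%N) /\
  (exists c1, exists c2, [/\ c1 \in C, c2 \in C, c1 != c2 & hdist c1 c2 = d]).

Definition is_linear_MDS (F : finFieldType) (n k : nat) (C : {vspace 'rV[F]_n}) : Prop :=
  \dim C = k /\ has_min_dist C (n - k + 1).

Definition list_decodable (F : finFieldType) (n : nat) (C : {vspace 'rV[F]_n}) (tau L : nat) : Prop :=
  forall y : 'rV[F]_n, (#|[set c : 'rV[F]_n | (c \in C) && (hdist y c <= tau)%N]| <= L)%N.

From HB Require Import structures.
From mathcomp Require Import all_boot all_order all_algebra all_field.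
From mathcomp Require Import zify.

(* Call y far if no codeword agrees with y on k + 1 positions.  The words
   agreeing with some codeword on a fixed (k+1)-set T number at most q^(n-1),
   and 0 is one of them; as there are C(n, k+1) <= q such T, at most
   1 + q (q^(n-1) - 1) < q^n words are not far.  Now fix a far y.  An MDS code
   has a codeword agreeing with y on any given k-set S of positions, and
   distinct S give distinct codewords, since otherwise that codeword would
   agree with y on k + 1 positions.  This yields C(n, k) > L codewords within
   distance n - k of y. *)

Set Implicit Arguments. Unset Strict Implicit. Unset Printing Implicit Defensive.
Import GRing.Theory.

Lemma card_bigcup_le_sum (T I : finType) (A : {set I}) (B : I -> {set T}) :
  (#|\bigcup_(i in A) B i| <= \sum_(i in A) #|B i|)%N.
Proof.
elim/big_rec2: _ => [|i U s _ IH]; first by rewrite cards0.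
by apply: leq_trans (leq_card_setU _ _) _; rewrite leq_add2l.
Qed.

Lemma card_bigcup_common (T I : finType) (A : {set I}) (B : I -> {set T})
    (x : T) (m : nat) :
  (forall i, i \in A -> x \in B i) -> (forall i, i \in A -> #|B i| <= m.+1)%N ->
  (#|\bigcup_(i in A) B i| <= (#|A| * m).+1)%N.
Proof.
move=> Bx cardB.
have sub : \bigcup_(i in A) B i \subset x |: \bigcup_(i in A) (B i :\ x).
  apply/subsetP => y /bigcupP [i iA yB]; rewrite !inE.
  by case: eqP => //= /eqP yx; apply/bigcupP; exists i; rewrite // !inE yx.
apply: leq_trans (subset_leq_card sub) _.
apply: leq_trans (leq_card_setU _ _) _; rewrite cards1 add1n ltnS.
apply: leq_trans (card_bigcup_le_sum _ _) _.
rewrite -sum_nat_const; apply: leq_sum => i iA.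
by have := cardB i iA; rewrite (cardsD1 x) Bx.
Qed.

Section Agreement.
Variables (F : finFieldType) (n : nat).
Local Notation V := 'rV[F]_n.

Definition agree (x y : V) : {set 'I_n} := [set i | x 0%R i == y 0%R i].

Definition agreeing_words (C : {vspace V}) (T : {set 'I_n}) : {set V} :=
  [set y | [exists c in C, T \subset agree y c]].

Definition codeword_ball (C : {vspace V}) (y : V) (r : nat) : {set V} :=
  [set c | (c \in C) && (hdist y c <= r)%N].

Lemma card_agree_le (x y : V) : (#|agree x y| <= n)%N.
Proof. by rewrite -[X in (_ <= X)%N](card_ord n) max_card. Qed.

Lemma hdistE (x y : V) : hdist x y = (n - #|agree x y|)%N.
Proof.
rewrite /hdist; have -> : [set i | x 0%R i != y 0%R i] = ~: agree x y.
  by apply/setP => i; rewrite !inE.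
by rewrite cardsCs setCK card_ord.
Qed.

Lemma min_dist_agree_eq (C : {vspace V}) (d : nat) (c c' : V) :
  has_min_dist C d -> c \in C -> c' \in C ->
  (n < #|agree c c'| + d)%N -> c = c'.
Proof.
move=> [dist_ge _] cC c'C agree_gt; apply/eqP; apply: contraTT agree_gt => ne.
have := card_agree_le c c'; have := dist_ge _ _ cC c'C ne.
by rewrite hdistE -leqNgt; lia.
Qed.

(* Restriction to a k-set S is injective on an [n, k] MDS code, hence onto
   F^S by counting. *)
Lemma mds_agreeing_words (k : nat) (C : {vspace V}) (S : {set 'I_n}) (y : V) :
  is_linear_MDS k C -> #|S| = k -> y \in agreeing_words C S.
Proof.
move=> [dimC mdC] cardS.
pose r (c : V) := [ffun j : {i | i \in S} => c 0%R (val j)].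
have r_inj : {in C &, injective r}.
  move=> c c' cC c'C /ffunP eq_r; apply: (min_dist_agree_eq mdC cC c'C).
  have : (#|S| <= #|agree c c'|)%N.
    apply/subset_leq_card/subsetP => i iS.
    by rewrite inE; have := eq_r (exist _ i iS); rewrite !ffunE => ->.
  by have := card_agree_le c c'; lia.
have r_onto : r @: C = setT.
  apply/eqP; rewrite eqEcard subsetT /= card_in_imset // card_vspace.
  by rewrite cardsT card_ffun card_sig dimC -cardS.
have : r y \in r @: C by rewrite r_onto inE.
case/imsetP => c cC /ffunP eq_r; rewrite inE; apply/existsP; exists c.
rewrite cC; apply/subsetP => i iS; rewrite inE.
by have := eq_r (exist _ i iS); rewrite !ffunE => ->.
Qed.

Lemma mem0_agreeing_words (C : {vspace V}) (T : {set 'I_n}) :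
  0%R \in agreeing_words C T.
Proof.
rewrite inE; apply/existsP; exists 0%R; rewrite mem0v /=.
by apply/subsetP => i _; rewrite inE.
Qed.

(* A word agreeing with a codeword c on T is c spliced with arbitrary values
   off T. *)
Lemma card_agreeing_words (C : {vspace V}) (T : {set 'I_n}) :
  (#|agreeing_words C T| <= #|F| ^ (\dim C + (n - #|T|)))%N.
Proof.
pose splice (p : V * {ffun {i | i \notin T} -> F}) : V :=
  (\row_i (if insub i is Some j then p.2 j else p.1 0%R i))%R.
have sub : agreeing_words C T \subset splice @: setX [set c | c \in C] setT.
  apply/subsetP => y; rewrite inE => /existsP [c /andP [cC Tc]].
  apply/imsetP; exists (c, [ffun j => y 0%R (val j)]).
    by rewrite in_setX inE in_setT andbT.
  apply/rowP => i; rewrite mxE /=; case: insubP => [j _ <-|]; first by rewrite ffunE.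
  by rewrite negbK => /(subsetP Tc); rewrite inE => /eqP.
apply: leq_trans (subset_leq_card sub) _; apply: leq_trans (leq_imset_card _ _) _.
rewrite cardsX cardsE card_vspace cardsT card_ffun card_sig -expnD.
suff -> : #|[pred i | i \notin T]| = (n - #|T|)%N by [].
have -> : #|[pred i | i \notin T]| = #|~: T| by apply: eq_card => i; rewrite !inE.
by rewrite cardsCs setCK card_ord.
Qed.

Lemma exists_far_word (k : nat) (C : {vspace V}) :
  \dim C = k -> (k < n)%N -> ('C(n, k.+1) <= #|F|)%N ->
  exists y : V, forall T : {set 'I_n}, #|T| = k.+1 -> y \notin agreeing_words C T.
Proof.
move=> dimC lt_kn le_binom_q.
pose U := \bigcup_(T in [set T : {set 'I_n} | #|T| == k.+1]) agreeing_words C T.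
have q_gt1 : (1 < #|F|)%N.
  by apply/card_gt1P; exists 0%R, 1%R; rewrite eq_sym oner_eq0.
have P_gt0 : (0 < #|F| ^ (n - 1))%N by rewrite expn_gt0 (ltnW q_gt1).
have cardU : (#|U| <= ('C(n, k.+1) * (#|F| ^ (n - 1)).-1).+1)%N.
  rewrite -[X in 'C(X, _)](card_ord n) -card_draws.
  apply: card_bigcup_common => [T _|T]; last rewrite inE => /eqP cardT.
    exact: mem0_agreeing_words.
  rewrite prednK //; apply: leq_trans (card_agreeing_words C T) _.
  by rewrite dimC cardT; have -> : (k + (n - k.+1) = n - 1)%N by lia.
have qn : (#|F| ^ n = #|F| * #|F| ^ (n - 1))%N.
  by rewrite -expnS; congr (_ ^ _); lia.
have : (0 < #|~: U|)%N.
  have := cardsC U; rewrite card_mx mul1n qn.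
  move: cardU le_binom_q q_gt1 P_gt0; nia.
case/card_gt0P => y; rewrite inE => yU; exists y => T cardT.
apply: contraNN yU => yT; apply/bigcupP; exists T => //.
by rewrite inE cardT.
Qed.

Lemma far_word_ball_card (k : nat) (C : {vspace V}) (y : V) :
  is_linear_MDS k C ->
  (forall T : {set 'I_n}, #|T| = k.+1 -> y \notin agreeing_words C T) ->
  ('C(n, k) <= #|codeword_ball C y (n - k)|)%N.
Proof.
move=> mdsC far_y.
pose K := [set S : {set 'I_n} | #|S| == k].
pose f (S : {set 'I_n}) := odflt 0%R [pick c in C | S \subset agree y c].
have fP (S : {set 'I_n}) : S \in K -> (f S \in C) && (S \subset agree y (f S)).
  rewrite inE => /eqP /(mds_agreeing_words y mdsC); rewrite inE.
  by rewrite /f; case: pickP => [c //|none] /existsP [c]; rewrite none.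
have f_inj : {in K &, injective f}.
  move=> S S' SK S'K eq_f; have /andP [_ S_agree] := fP _ SK.
  have /andP [fC S'_agree] := fP _ S'K; rewrite -eq_f in fC S'_agree.
  apply/eqP; apply: contraT => neSS'.
  have /subsetPn [x xS' xS] : ~~ (S' \subset S).
    apply: contra neSS' => subS'S; rewrite eq_sym eqEcard subS'S.
    by move: SK S'K; rewrite !inE => /eqP -> /eqP ->; rewrite leqnn.
  have cardxS : #|x |: S| = k.+1.
    by rewrite cardsU1 xS; move: SK; rewrite inE => /eqP ->.
  suff : y \in agreeing_words C (x |: S) by rewrite (negbTE (far_y _ cardxS)).
  rewrite inE; apply/existsP; exists (f S).
  by rewrite fC /= subUset S_agree andbT sub1set (subsetP S'_agree).
have sub : f @: K \subset codeword_ball C y (n - k).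
  apply/subsetP => _ /imsetP [S SK ->]; have /andP [fC S_agree] := fP _ SK.
  rewrite inE fC hdistE leq_sub2l //.
  by move: SK; rewrite inE => /eqP <-; apply: subset_leq_card.
by have := subset_leq_card sub; rewrite card_in_imset // card_draws card_ord.
Qed.

End Agreement.

Theorem mainTheorem6 (F : finFieldType) (n k : nat) (C : {vspace 'rV[F]_n}) (L : nat) :
  is_linear_MDS k C -> (k < n)%N -> (0 < L)%N -> (L < 'C(n, k))%N ->
  ('C(n, k.+1) <= #|F|)%N ->
  ~ list_decodable C (n - k) L.
Proof.
move=> mdsC lt_kn _ lt_L_binom le_binom_q decC.
have [y far_y] := exists_far_word mdsC.1 lt_kn le_binom_q.
have ball_le : (#|codeword_ball C y (n - k)| <= L)%N := decC y.
have := leq_trans (far_word_ball_card mdsC far_y) ball_le.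
by rewrite leqNgt lt_L_binom.
Qed.
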